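(* Let $X=(X_1,\dots,X_d)$ be a random vector with values in $\{0,1\}^d$ such that $\mathbb{P}(X=x)>0$ for every $x\in\{0,1\}^d$, and let $G:\{0,1\}^d\to\mathbb{R}$. Suppose there exist a subset $\mathcal{C}\subseteq D:=\{1,\dots,d\}$ with $|\mathcal{C}|<d$ and a function $H:\{0,1\}^{|\mathcal{C}|}\to\mathbb{R}$ such that $G(X)=H(X_{\mathcal{C}})$ almost surely. Write the expansions $$G(X)=\sum_{A\subseteq D}\beta^{(G)}_A e_A(X_A),\qquad H(X_{\mathcal{C}})=\sum_{A\subseteq \mathcal{C}}\beta^{(H)}_A e_A(X_A),$$ where the coefficients are the unique real coefficients for which these identities hold almost surely. Then for every $A\subseteq D$: $\beta^{(G)}_A=\beta^{(H)}_A$ if $A\subseteq\mathcal{C}$, and $\beta^{(G)}_A=0$ if $A\not\subseteq\mathcal{C}$.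
   Context: For $A\subseteq D$, $X_A:=(X_i)_{i\in A}$, $\mathbf{P}_A(x_A):=\mathbb{P}(X_A=x_A)$, and $e_A(X_A):=\dfrac{(-1)^{\sum_{j\in A}X_j}}{\mathbf{P}_A(X_A)}$, with $e_\emptyset(X_\emptyset)=1$. Under the full-support hypothesis, $\{e_A(X_A)\}_{A\subseteq D}$ (resp. $\{e_A(X_A)\}_{A\subseteq\mathcal{C}}$) is a basis of the space of real functions of $X$ (resp. of $X_{\mathcal{C}}$), so the coefficients in the two expansions exist and are unique. *)

From mathcomp Require Import all_boot all_order all_algebra.
Set Implicit Arguments. Unset Strict Implicit. Unset Printing Implicit Defensive.
Import Order.TTheory GRing.Theory Num.Theory.
Local Open Scope ring_scope.

(* Points of {0,1}^d: boolean vectors indexed by D = 'I_d (true = 1). *)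
Notation cube d := {ffun 'I_d -> bool}.

Definition marg (R : realFieldType) (d : nat) (p : cube d -> R) (A : {set 'I_d})
  (x : cube d) : R :=
  \sum_(y : cube d | [forall j in A, y j == x j]) p y.

Definition eA (R : realFieldType) (d : nat) (p : cube d -> R) (A : {set 'I_d})
  (x : cube d) : R :=
  (-1) ^+ (\sum_(j in A) (x j : nat))%N / marg p A x.

(* x_C viewed as an element of {0,1}^{|C|}, coordinates of C in increasing order. *)
Definition restr (d : nat) (C : {set 'I_d}) (x : cube d) : {ffun 'I_#|C| -> bool} :=
  [ffun i => x (enum_val i)].

From mathcomp Require Import all_boot all_order all_algebra.
From mathcomp Require Import lra.
Import Order.TTheory GRing.Theory Num.Theory.
Local Open Scope ring_scope.

(* The functions e_A are linearly independent.  Test an expansion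
   sum_A c_A e_A = 0 against the sign s_B(y) = (-1)^(sum_{j in B} y_j): if B is
   not contained in A, toggling a coordinate j in B \ A changes the sign of s_B
   but leaves e_A unchanged, so sum_y s_B(y) e_A(y) = 0; for A = B the product
   s_B e_B = 1 / P_B is positive.  The test therefore gives
   c_B = 0 as soon as c_A = 0 for all strict supersets A of B, and descending
   induction on |B| kills every coefficient.  Applied to the difference of the
   two expansions of G(X) = H(X_C), this is the theorem. *)

Section IndependenceOfEA.

Variables (R : realFieldType) (d : nat) (p : cube d -> R).

Definition flip (j : 'I_d) (y : cube d) : cube d :=
  [ffun i => if i == j then ~~ y i else y i].

Lemma flipK j : involutive (flip j).
Proof. by move=> y; apply/ffunP => i; rewrite !ffunE; case: eqP => // _; rewrite negbK. Qed.

Definition parity (B : {set 'I_d}) (y : cube d) : R :=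
  (-1) ^+ (\sum_(i in B) (y i : nat))%N.

Lemma parity_flip (B : {set 'I_d}) j y : j \in B -> parity B (flip j y) = - parity B y.
Proof.
move=> jB; rewrite /parity (bigD1 j jB) [in RHS](bigD1 j jB) /= !exprD ffunE eqxx.
rewrite (eq_bigr (fun i => y i : nat)) => [|i /andP[_ /negbTE ij]]; last by rewrite ffunE ij.
by case: (y j); rewrite /= ?mul1r ?mulN1r ?opprK.
Qed.

Lemma eA_eq_on (A : {set 'I_d}) (y y' : cube d) : {in A, y =1 y'} -> eA p A y = eA p A y'.
Proof.
move=> yy'; rewrite /eA /marg (eq_bigr (fun i => y' i : nat)) => [|i /yy'-> //].
by congr (_ / _); apply: eq_bigl => z; apply: eq_forallb_in => i /yy'->.
Qed.

Lemma eA_flip (A : {set 'I_d}) j y : j \notin A -> eA p A (flip j y) = eA p A y.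
Proof.
move=> jA; apply: eA_eq_on => i iA; rewrite ffunE.
by case: eqP iA => // ->; rewrite (negbTE jA).
Qed.

Definition parity_pairing (B A : {set 'I_d}) : R := \sum_y parity B y * eA p A y.

Lemma parity_pairing_eq0 (B A : {set 'I_d}) : ~~ (B \subset A) -> parity_pairing B A = 0.
Proof.
case/subsetPn => j jB jA.
have pairingN : parity_pairing B A = - parity_pairing B A.
  rewrite {1}/parity_pairing (reindex_inj (can_inj (flipK j))) /= -sumrN.
  by apply: eq_bigr => y _; rewrite parity_flip // eA_flip // mulNr.
lra.
Qed.

Lemma parity_pairing_expansion (c : {set 'I_d} -> R) (B : {set 'I_d}) :
  \sum_y parity B y * (\sum_A c A * eA p A y) = \sum_A c A * parity_pairing B A.
Proof.
under eq_bigr do rewrite mulr_sumr.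
rewrite exchange_big; apply: eq_bigr => A _ /=.
by rewrite mulr_sumr; apply: eq_bigr => y _; rewrite mulrCA.
Qed.

Hypothesis p_pos : forall x, 0 < p x.

Lemma marg_gt0 (A : {set 'I_d}) x : 0 < marg p A x.
Proof.
rewrite /marg (bigD1 x) /=; last by apply/forall_inP.
by apply: ltr_wpDr (p_pos x); apply: sumr_ge0 => y _; apply: ltW.
Qed.

Lemma parity_pairing_diag_gt0 (B : {set 'I_d}) : 0 < parity_pairing B B.
Proof.
have pairingE : parity_pairing B B = \sum_y (marg p B y)^-1.
  by apply: eq_bigr => y _; rewrite /eA mulrA -expr2 sqrr_sign mul1r.
rewrite pairingE (bigD1 [ffun=> false]) //=.
apply: ltr_wpDr; last by rewrite invr_gt0 marg_gt0.
by apply: sumr_ge0 => y _; rewrite invr_ge0 ltW ?marg_gt0.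
Qed.

Lemma eA_free (c : {set 'I_d} -> R) :
  (forall x, \sum_A c A * eA p A x = 0) -> forall B : {set 'I_d}, c B = 0.
Proof.
move=> c0.
have pairing0 B : \sum_A c A * parity_pairing B A = 0.
  by rewrite -parity_pairing_expansion big1 // => y _; rewrite c0 mulr0.
suff cB0 n B : (#|~: B| < n)%N -> c B = 0 by move=> B; apply: (cB0 #|~: B|.+1).
elim: n B => // n IH B; rewrite ltnS => Bn.
have supB0 (A : {set 'I_d}) : B \proper A -> c A = 0.
  by rewrite -properC => /proper_card AB; apply: IH (leq_trans AB Bn).
move: (pairing0 B); rewrite (bigD1 B) //= big1 ?addr0 => [/eqP|A AB].
  by rewrite mulf_eq0 (gt_eqF (parity_pairing_diag_gt0 B)) orbF => /eqP.
have [BA|nBA] := boolP (B \subset A); last by rewrite parity_pairing_eq0 ?mulr0.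
by rewrite supB0 ?mul0r // properEneq eq_sym AB.
Qed.

End IndependenceOfEA.

Theorem corollary2 (R : realFieldType) (d : nat) (p : {ffun 'I_d -> bool} -> R)
  (p_pos : forall x, 0 < p x) (p_sum : \sum_x p x = 1)
  (G : {ffun 'I_d -> bool} -> R) (C : {set 'I_d}) (hC : (#|C| < d)%N)
  (H : {ffun 'I_#|C| -> bool} -> R)
  (hGH : forall x, 0 < p x -> G x = H (restr C x))
  (betaG betaH : {set 'I_d} -> R)
  (hbG : forall x, 0 < p x -> G x = \sum_(A : {set 'I_d}) betaG A * eA p A x)
  (hbH : forall x, 0 < p x ->
     H (restr C x) = \sum_(A : {set 'I_d} | A \subset C) betaH A * eA p A x) :
  forall A : {set 'I_d},
    betaG A = (if A \subset C then betaH A else 0).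
Proof.
pose betaH0 (A : {set 'I_d}) := if A \subset C then betaH A else 0.
suff diff0 A : betaG A - betaH0 A = 0 by move=> A; apply/eqP; rewrite -subr_eq0 diff0.
apply: (@eA_free R d p p_pos (fun B => betaG B - betaH0 B)) => x.
under eq_bigr do rewrite mulrBl.
rewrite sumrB -hbG // hGH // hbH // big_mkcond /=; apply/eqP; rewrite subr_eq0.
by apply/eqP/eq_bigr => B _; rewrite /betaH0; case: ifP; rewrite ?mul0r.
Qed.
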